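(* Let $G\subset\mathrm{SU}(2)$ be a subgroup and let $\sigma\in\operatorname{Hom}(\pi_1(M),G)$, with $[\sigma]\in E$ having global coordinates $(x,y,z)$. Then for every permutation $(x',y',z')$ of $(x,y,z)$ there is $\sigma'\in\operatorname{Hom}(\pi_1(M),G)$ whose class has global coordinates $(x',y',z')$. If in addition $-I\in G$, then each of the triples $(-x,y,-z)$, $(x,-y,-z)$, $(-x,-y,z)$ is likewise the global coordinate triple of the class of some element of $\operatorname{Hom}(\pi_1(M),G)$.
   Context: $M$ is a torus with one boundary component; $\pi_1(M)$ is the free group on $X,Y$. $E=\operatorname{Hom}(\pi_1(M),\mathrm{SU}(2))/\mathrm{SU}(2)$ (conjugation action), and the global coordinates of a class $[\sigma]\in E$ are $(\operatorname{tr}\sigma(X),\operatorname{tr}\sigma(Y),\operatorname{tr}\sigma(XY))$, which determine the class uniquely. *)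

From HB Require Import structures.
From mathcomp Require Import all_boot all_order all_algebra all_fingroup.
From mathcomp Require Import complex.
From mathcomp Require Import reals.
Set Implicit Arguments. Unset Strict Implicit. Unset Printing Implicit Defensive.
Import Order.TTheory GRing.Theory Num.Theory.
Local Open Scope ring_scope.
Local Open Scope complex_scope.

Definition mat2 (R : realType) := 'M[R[i]]_2.

Definition adjoint (R : realType) (A : mat2 R) : mat2 R :=
  (map_mx (fun z : R[i] => z^*) A)^T.

Definition SU2 (R : realType) (A : mat2 R) : Prop :=
  A *m adjoint A = 1%:M /\ \det A = 1.

Definition is_subgroup_SU2 (R : realType) (G : mat2 R -> Prop) : Prop :=
  (forall A, G A -> SU2 A) /\ G 1%:M /\
  (forall A B, G A -> G B -> G (A *m B)) /\
  (forall A, G A -> G (invmx A)).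

(* Hom(pi_1(M), G) for pi_1(M) free on X, Y: a homomorphism is determined
   by (and freely determined from) the images sigma(X), sigma(Y) in G. *)
Record hom_F2 (R : realType) (G : mat2 R -> Prop) := HomF2 {
  sigX : mat2 R; sigY : mat2 R; sigX_in : G sigX; sigY_in : G sigY }.

Definition coords (R : realType) (G : mat2 R -> Prop) (s : hom_F2 G)
  : 'I_3 -> R[i] :=
  fun k => match val k with
           | 0%N => \tr (sigX s)
           | 1%N => \tr (sigY s)
           | _ => \tr (sigX s *m sigY s)
           end.

Definition iX : 'I_3 := @Ordinal 3 0 isT.
Definition iY : 'I_3 := @Ordinal 3 1 isT.
Definition iXY : 'I_3 := @Ordinal 3 2 isT.

From HB Require Import structures.
From mathcomp Require Import all_boot all_order all_algebra all_fingroup.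
From mathcomp Require Import complex.
From mathcomp Require Import reals.
Set Implicit Arguments. Unset Strict Implicit. Unset Printing Implicit Defensive.
Import Order.TTheory GRing.Theory Num.Theory.
Local Open Scope ring_scope.

(* In SL(2) a matrix and its inverse have the same trace, so replacing the
   generators (X, Y) by (Y, X), (X^-1, XY) or (XY, Y^-1) permutes the
   coordinates (tr X, tr Y, tr XY) by the three transpositions of S_3, which
   generate S_3.  Multiplying a generator by the central element -I changes
   the sign of the trace of each word with odd exponent sum in it. *)

Lemma mxtrace_adj2 (R : comNzRingType) (M : 'M[R]_2) : \tr (\adj M) = \tr M.
Proof.
rewrite /mxtrace !big_ord_recr !big_ord0 /= !mxE /cofactor !det_mx11 !mxE /=.
rewrite !add0r /= !expr0 !mul1r -signr_odd /= expr0 mul1r addrC.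
by congr (_ + _); congr (M _ _); apply/val_inj.
Qed.

Lemma mxtrace_invmx2 (R : comUnitRingType) (M : 'M[R]_2) :
  M \in unitmx -> \tr (invmx M) = (\det M)^-1 * \tr M.
Proof. by rewrite /invmx => ->; rewrite mxtraceZ mxtrace_adj2. Qed.

Lemma forall_ord3 (P : 'I_3 -> Prop) : P iX -> P iY -> P iXY -> forall k, P k.
Proof.
move=> PX PY PXY [[|[|[|k]]] lt_k3] //.
- by rewrite (_ : Ordinal _ = iX) //; apply/val_inj.
- by rewrite (_ : Ordinal _ = iY) //; apply/val_inj.
- by rewrite (_ : Ordinal _ = iXY) //; apply/val_inj.
Qed.

Lemma tperm3_cases (i j : 'I_3) :
  [\/ tperm i j = 1%g, tperm i j = tperm iX iY,
      tperm i j = tperm iY iXY | tperm i j = tperm iX iXY].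
Proof.
move: i j; do 2!apply: forall_ord3;
rewrite ?tperm1 ?[tperm iY iX]tpermC ?[tperm iXY _]tpermC;
by [apply: Or41 | apply: Or42 | apply: Or43 | apply: Or44].
Qed.

Section Realizable.

Variables (R : realType) (G : mat2 R -> Prop).
Hypothesis HG : is_subgroup_SU2 G.

Lemma subgroup_det1 A : G A -> \det A = 1.
Proof. by case: HG => SU_G _ /SU_G []. Qed.

Lemma subgroup_unitmx A : G A -> A \in unitmx.
Proof. by move=> /subgroup_det1 detA; rewrite unitmxE detA unitr1. Qed.

Lemma subgroupM A B : G A -> G B -> G (A *m B).
Proof. by case: HG => _ [_ [G_mul _]]; apply: G_mul. Qed.

Lemma subgroupV A : G A -> G (invmx A).
Proof. by case: HG => _ [_ [_ G_inv]]; apply: G_inv. Qed.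

Lemma subgroupN A : G (- 1%:M) -> G A -> G (- A).
Proof.
move=> GN GA; have -> : - A = - 1%:M *m A by rewrite mulNmx mul1mx.
exact: subgroupM.
Qed.

Lemma mxtrace_invmx_subgroup A : G A -> \tr (invmx A) = \tr A.
Proof.
move=> GA; rewrite mxtrace_invmx2 ?subgroup_unitmx //.
by rewrite subgroup_det1 // invr1 mul1r.
Qed.

Definition realizable (t : 'I_3 -> R[i]) :=
  exists s : hom_F2 G, forall k, coords s k = t k.

Lemma realizable_coords (s : hom_F2 G) : realizable (coords s).
Proof. by exists s. Qed.

Lemma eq_realizable t t' : t =1 t' -> realizable t -> realizable t'.
Proof. by move=> eq_t [s Hs]; exists s => k; rewrite Hs eq_t. Qed.

Lemma realizable_tpermXY t : realizable t -> realizable (t \o tperm iX iY).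
Proof.
move=> [[A B GA GB] Ht]; exists (HomF2 GB GA).
apply: forall_ord3; rewrite /= ?tpermL ?tpermR ?tpermD // -Ht /coords /= //.
exact: mxtrace_mulC.
Qed.

Lemma realizable_tpermYXY t : realizable t -> realizable (t \o tperm iY iXY).
Proof.
move=> [[A B GA GB] Ht]; exists (HomF2 (subgroupV GA) (subgroupM GA GB)).
apply: forall_ord3; rewrite /= ?tpermL ?tpermR ?tpermD // -Ht /coords /= //.
- exact: mxtrace_invmx_subgroup.
- by rewrite mulKmx ?subgroup_unitmx.
Qed.

Lemma realizable_tpermXXY t : realizable t -> realizable (t \o tperm iX iXY).
Proof.
move=> [[A B GA GB] Ht]; exists (HomF2 (subgroupM GA GB) (subgroupV GB)).
apply: forall_ord3; rewrite /= ?tpermL ?tpermR ?tpermD // -Ht /coords /= //.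
- exact: mxtrace_invmx_subgroup.
- by rewrite mulmxK ?subgroup_unitmx.
Qed.

Lemma realizable_tperm t i j : realizable t -> realizable (t \o tperm i j).
Proof.
case: (tperm3_cases i j) => ->.
- by apply: eq_realizable => k /=; rewrite perm1.
- exact: realizable_tpermXY.
- exact: realizable_tpermYXY.
- exact: realizable_tpermXXY.
Qed.

Lemma realizable_perm t (s : 'S_3) : realizable t -> realizable (t \o s).
Proof.
have [ts -> _] := prod_tpermP s; elim: ts t => [|[i j] ts IHts] t Ht.
  by apply: eq_realizable Ht => k /=; rewrite big_nil perm1.
apply: eq_realizable (realizable_tperm i j (IHts t Ht)) => k /=.
by rewrite big_cons permM.
Qed.

End Realizable.

Theorem proposition3p1 (R : realType) (G : mat2 R -> Prop)
  (HG : is_subgroup_SU2 G) (sigma : hom_F2 G) :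
  (forall s : 'S_3, exists sigma' : hom_F2 G,
      forall k : 'I_3, coords sigma' k = coords sigma (s k)) /\
  (G (- 1%:M) ->
     let x := coords sigma iX in
     let y := coords sigma iY in
     let z := coords sigma iXY in
     (exists s1 : hom_F2 G,
        coords s1 iX = - x /\ coords s1 iY = y /\ coords s1 iXY = - z) /\
     (exists s2 : hom_F2 G,
        coords s2 iX = x /\ coords s2 iY = - y /\ coords s2 iXY = - z) /\
     (exists s3 : hom_F2 G,
        coords s3 iX = - x /\ coords s3 iY = - y /\ coords s3 iXY = z)).
Proof.
split=> [s | GN /=].
  have [sigma' Hsigma'] := realizable_perm HG s (realizable_coords sigma).
  by exists sigma'.
case: sigma => A B GA GB.
have GNA := subgroupN HG GN GA; have GNB := subgroupN HG GN GB.
split; [|split].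
- by exists (HomF2 GNA GB); rewrite /coords /= mulNmx !raddfN.
- by exists (HomF2 GA GNB); rewrite /coords /= mulmxN !raddfN.
- by exists (HomF2 GNA GNB); rewrite /coords /= mulNmx mulmxN opprK !raddfN.
Qed.
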